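(* Let $n\ge 1$, $L>0$, $D\subseteq\mathbb{R}$ compact, and let $T$ be an input-dependent CPTP map on $n$ qubits (for each $x\in D\cap[-L,L]$, $T(x)$ is a CPTP map on $2^n\times 2^n$ complex matrices) such that for some $0<\epsilon\le1$ and all $x\in D\cap[-L,L]$, $\sup_{A\in H_0(2^n),A\ne0}\|T(x)A\|_2/\|A\|_2\le 1-\epsilon$, where $H_0(2^n)$ is the space of traceless Hermitian $2^n\times 2^n$ matrices. Let $h$ be any real-valued function on the set $\mathcal{D}(\mathbb{C}^{2^n})$ of density operators. Then for every $u\in K_L(D)$ and every $k\in\mathbb{Z}$, and every choice of density operators $\rho_{-N}\in\mathcal{D}(\mathbb{C}^{2^n})$, $N\ge 0$, the limit $$\lim_{N\to\infty} T(u_k)T(u_{k-1})\cdots T(u_{k-N})\,\rho_{-N}$$ exists in $\mathcal{D}(\mathbb{C}^{2^n})$ (with respect to $\|\cdot\|_2$) and is independent of the choice of the $\rho_{-N}$. Consequently the filter $M_h^T:K_L(D)\to\mathbb{R}^{\mathbb{Z}}$, $M_h^T(u)_k=h\big(\lim_{N\to\infty}T(u_k)T(u_{k-1})\cdots T(u_{k-N})\rho_{-N}\big)$, is well-defined.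
   Context: $\|\cdot\|_2$ is the Schatten 2-norm. $K_L(D)$ is the set of real sequences $\{u_k\}_{k\in\mathbb{Z}}$ with $u_k\in D\cap[-L,L]$ for all $k$; $\mathbb{R}^{\mathbb{Z}}$ is the set of real bi-infinite sequences. *)

From HB Require Import structures.
From mathcomp Require Import all_boot all_order all_algebra.
From mathcomp Require Import all_classical all_reals all_analysis.
From mathcomp Require Import complex.

Set Implicit Arguments.
Unset Strict Implicit.
Unset Printing Implicit Defensive.

Import Order.TTheory GRing.Theory Num.Theory.
Local Open Scope ring_scope.
Local Open Scope classical_set_scope.

Section QDefs.
Variable R : realType.
Local Notation C := (R[i]).

Definition adjmx (m k : nat) (A : 'M[C]_(m, k)) : 'M[C]_(k, m) :=
  \matrix_(i, j) (A j i)^*.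

Definition hermitian (N : nat) (A : 'M[C]_N) : Prop := adjmx A = A.

Definition psd (N : nat) (A : 'M[C]_N) : Prop :=
  hermitian A /\ forall x : 'cV[C]_N, 0 <= (adjmx x *m A *m x) 0 0.

Definition density (N : nat) (A : 'M[C]_N) : Prop := psd A /\ \tr A = 1.

Definition traceless_herm (N : nat) (A : 'M[C]_N) : Prop :=
  hermitian A /\ \tr A = 0.

Definition schatten2 (N : nat) (A : 'M[C]_N) : R :=
  Num.sqrt (complex.Re (\tr (adjmx A *m A))).

Definition lin_map (N : nat) (T : 'M[C]_N -> 'M[C]_N) : Prop :=
  forall (a : C) (A B : 'M[C]_N), T (a *: A + B) = a *: T A + T B.

Definition trace_preserving (N : nat) (T : 'M[C]_N -> 'M[C]_N) : Prop :=
  forall A, \tr (T A) = \tr A.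

(* id_m (x) T acting on an (m N) x (m N) matrix viewed as m x m blocks *)
Definition ampliation (N m : nat) (T : 'M[C]_N -> 'M[C]_N)
    (X : 'M[C]_(\sum_(i < m) N)) : 'M[C]_(\sum_(i < m) N) :=
  \mxblock_(i < m, j < m) T (submxblock X i j).

Definition completely_positive (N : nat) (T : 'M[C]_N -> 'M[C]_N) : Prop :=
  forall (m : nat) (X : 'M[C]_(\sum_(i < m) N)), psd X -> psd (ampliation T X).

Definition CPTP (N : nat) (T : 'M[C]_N -> 'M[C]_N) : Prop :=
  [/\ lin_map T, completely_positive T & trace_preserving T].

Definition KL (L : R) (D : set R) (u : int -> R) : Prop :=
  forall k, D (u k) /\ `|u k| <= L.

(* evol T u k N rho = T(u_k) T(u_{k-1}) ... T(u_{k-N}) rho *)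
Fixpoint evol (N : nat) (T : R -> 'M[C]_N -> 'M[C]_N) (u : int -> R) (k : int)
    (M : nat) (rho : 'M[C]_N) : 'M[C]_N :=
  match M with
  | 0 => T (u k) rho
  | M'.+1 => evol T u k M' (T (u (k - M%:Z)) rho)
  end.

End QDefs.

From Pilot Require Import Defs.
From HB Require Import structures.
From mathcomp Require Import all_boot all_order all_algebra.
From mathcomp Require Import all_classical all_reals all_analysis.
From mathcomp Require Import complex.
From mathcomp Require Import ring lra.

Set Implicit Arguments.
Unset Strict Implicit.
Unset Printing Implicit Defensive.

Import Order.TTheory GRing.Theory Num.Theory.
Import numFieldTopology.Exports numFieldNormedType.Exports.
Local Open Scope ring_scope.
Local Open Scope classical_set_scope.

(* Since the difference of two density operators is traceless Hermitian, each
   channel T(u_j) is a (1 - eps)-contraction for the Schatten 2-norm on density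
   operators, so T(u_k)...T(u_{k-N}) shrinks the bounded set of density
   operators to diameter O((1 - eps)^N).  Hence the images of a fixed state form
   a Cauchy sequence; its entrywise limit is again a density operator (the set of
   density operators is closed), and every other choice of initial states rho_{-N}
   lands within O((1 - eps)^N) of it. *)

Section DensityOperators.
Variable R : realType.
Local Notation Re := (@complex.Re R).
Local Notation Im := (@complex.Im R).
Implicit Types (x y w : R[i]) (z : nat -> R[i]).

Lemma ReM x y : Re (x * y) = Re x * Re y - Im x * Im y.
Proof. by case: x; case: y. Qed.

Lemma ImM x y : Im (x * y) = Re x * Im y + Im x * Re y.
Proof. by case: x => a b; case: y => c d /=; rewrite [b * c]mulrC. Qed.

Lemma ReJ x : Re x^* = Re x.
Proof. by case: x. Qed.

Lemma ImJ x : Im x^* = - Im x.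
Proof. by case: x. Qed.

(* MathComp-Analysis gives R[i] no complete uniform structure, so convergence of
   complex sequences is tracked through real and imaginary parts. *)
Definition coord_cvg z w :=
  Re (z N) @[N --> \oo] --> Re w /\ Im (z N) @[N --> \oo] --> Im w.

Lemma coord_cvg_cst w : coord_cvg (fun=> w) w.
Proof. by split; exact: cvg_cst. Qed.

Lemma coord_cvg_unique z w1 w2 : coord_cvg z w1 -> coord_cvg z w2 -> w1 = w2.
Proof.
case: w1 w2 => [a1 b1] [a2 b2] [/= Ha1 Hb1] [/= Ha2 Hb2].
by congr (Complex _ _); [exact: cvg_unique Ha1 Ha2|exact: cvg_unique Hb1 Hb2].
Qed.

Lemma coord_cvg_sum (I : finType) (z : I -> nat -> R[i]) (w : I -> R[i]) :
  (forall i, coord_cvg (z i) (w i)) ->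
  coord_cvg (fun N => \sum_i z i N) (\sum_i w i).
Proof.
move=> zw; split; rewrite raddf_sum; under eq_fun do rewrite raddf_sum;
  (apply: cvg_big => [|i _]; first exact: add_continuous).
  exact: (zw i).1.
exact: (zw i).2.
Qed.

Lemma coord_cvgMl c z w : coord_cvg z w -> coord_cvg (fun N => c * z N) (c * w).
Proof.
case=> ReZ ImZ; split.
  by rewrite ReM; under eq_cvg do rewrite ReM; apply: cvgB; apply: cvgM => //; exact: cvg_cst.
by rewrite ImM; under eq_cvg do rewrite ImM; apply: cvgD; apply: cvgM => //; exact: cvg_cst.
Qed.

Lemma coord_cvgJ z w : coord_cvg z w -> coord_cvg (fun N => (z N)^*) w^*.
Proof.
case=> ReZ ImZ; split; [rewrite ReJ|rewrite ImJ].
  by under eq_cvg do rewrite ReJ.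
by under eq_cvg do rewrite ImJ; exact: cvgN.
Qed.

Lemma coord_cvg_ge0 z w : (forall N, 0 <= z N) -> coord_cvg z w -> 0 <= w.
Proof.
move=> z_ge0 [ReZ ImZ]; rewrite lecE; apply/andP; split.
  have ImZ0 : Im (z N) @[N --> \oo] --> 0.
    by under eq_cvg do rewrite ger0_Im //; exact: cvg_cst.
  by apply/eqP; exact: cvg_unique ImZ ImZ0.
apply: cvgr_to_ge ReZ _; apply: nearW => N.
by have := z_ge0 N; rewrite lecE => /andP[].
Qed.

Lemma ler_psum_term (I : finType) (F : I -> R) i :
  (forall j, 0 <= F j) -> F i <= \sum_j F j.
Proof. by move=> F_ge0; rewrite (bigD1 i) //= lerDl sumr_ge0. Qed.

Section Schatten2.
Variable p : nat.
Implicit Types A B : 'M[R[i]]_p.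

Definition frob_sq A := \sum_i \sum_j (Re (A i j) ^+ 2 + Im (A i j) ^+ 2).

Lemma schatten2E A : schatten2 A = Num.sqrt (frob_sq A).
Proof.
rewrite /schatten2 /frob_sq /mxtrace raddf_sum exchange_big /=; congr Num.sqrt.
apply: eq_bigr => j _; rewrite mxE raddf_sum; apply: eq_bigr => i _.
by rewrite mxE /= ReM ReJ ImJ mulNr opprK.
Qed.

Lemma entry_sq_le_frob_sq A i j : Re (A i j) ^+ 2 + Im (A i j) ^+ 2 <= frob_sq A.
Proof.
have entry_ge0 k l : 0 <= Re (A k l) ^+ 2 + Im (A k l) ^+ 2 by rewrite addr_ge0 ?sqr_ge0.
apply: le_trans (ler_psum_term i _); first exact: ler_psum_term.
by move=> k; apply: sumr_ge0.
Qed.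

Lemma schatten2_ge0 A : 0 <= schatten2 A.
Proof. by rewrite schatten2E sqrtr_ge0. Qed.

Lemma schatten2_eq0 A : (schatten2 A == 0) = (A == 0).
Proof.
apply/idP/eqP => [|->]; last first.
  rewrite schatten2E /frob_sq big1 ?sqrtr0 // => i _.
  by rewrite big1 // => j _; rewrite mxE expr0n addr0.
rewrite schatten2E sqrtr_eq0 => frob_le0; apply/matrixP => i j; rewrite mxE.
have := entry_sq_le_frob_sq A i j.
have := sqr_ge0 (Re (A i j)); have := sqr_ge0 (Im (A i j)).
move=> Im_ge0 Re_ge0 entry_le.
have /eqP : Re (A i j) ^+ 2 = 0 by lra.
have /eqP : Im (A i j) ^+ 2 = 0 by lra.
by rewrite !sqrf_eq0 => /eqP ImA /eqP ReA; apply/eqP; rewrite eq_complex ReA ImA !eqxx.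
Qed.

Lemma schatten2_gt0 A : A != 0 -> 0 < schatten2 A.
Proof. by move=> A_neq0; rewrite lt_neqAle schatten2_ge0 andbT eq_sym schatten2_eq0. Qed.

Lemma Re_le_schatten2 A i j : `|Re (A i j)| <= schatten2 A.
Proof.
rewrite schatten2E -sqrtr_sqr; apply: ler_wsqrtr.
by apply: le_trans (entry_sq_le_frob_sq A i j); rewrite lerDl sqr_ge0.
Qed.

Lemma Im_le_schatten2 A i j : `|Im (A i j)| <= schatten2 A.
Proof.
rewrite schatten2E -sqrtr_sqr; apply: ler_wsqrtr.
by apply: le_trans (entry_sq_le_frob_sq A i j); rewrite lerDr sqr_ge0.
Qed.

Lemma schatten2_le_entries A (d : R) : 0 <= d ->
  (forall i j, `|Re (A i j)| <= d /\ `|Im (A i j)| <= d) ->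
  schatten2 A <= Num.sqrt (2 * p%:R ^+ 2) * d.
Proof.
move=> d_ge0 A_le; rewrite schatten2E -(ger0_norm d_ge0) -sqrtr_sqr -sqrtrM ?mulr_ge0 ?sqr_ge0 //.
apply: ler_wsqrtr.
have -> : 2 * p%:R ^+ 2 * d ^+ 2 = \sum_(i < p) \sum_(j < p) (d ^+ 2 + d ^+ 2).
  by rewrite !sumr_const card_ord -mulrnA -[in RHS]mulr_natl natrM; ring.
have sqr_le (x : R) : `|x| <= d -> x ^+ 2 <= d ^+ 2.
  by move=> x_le; rewrite -real_normK ?num_real //; apply: lerXn2r; rewrite ?nnegrE.
apply: ler_sum => i _; apply: ler_sum => j _.
by have [ReA ImA] := A_le i j; apply: lerD; apply: sqr_le.
Qed.

Lemma schatten2_le_add A B :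
  schatten2 (A + B) <= Num.sqrt (2 * p%:R ^+ 2) * (schatten2 A + schatten2 B).
Proof.
apply: schatten2_le_entries; first by rewrite addr_ge0 ?schatten2_ge0.
move=> i j; rewrite mxE !raddfD; split; apply: le_trans (ler_normD _ _) _; apply: lerD;
  by [apply: Re_le_schatten2 | apply: Im_le_schatten2].
Qed.

End Schatten2.

Lemma adjmxD m n (A B : 'M[R[i]]_(m, n)) : adjmx (A + B) = adjmx A + adjmx B.
Proof. by apply/matrixP => i j; rewrite !mxE rmorphD. Qed.

Lemma adjmxB m n (A B : 'M[R[i]]_(m, n)) : adjmx (A - B) = adjmx A - adjmx B.
Proof. by apply/matrixP => i j; rewrite !mxE rmorphB. Qed.

Lemma adjmxZ m n c (A : 'M[R[i]]_(m, n)) : adjmx (c *: A) = c^* *: adjmx A.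
Proof. by apply/matrixP => i j; rewrite !mxE rmorphM. Qed.

Section Density.
Variable p : nat.
Implicit Types A B : 'M[R[i]]_p.
Local Notation ecol i := (delta_mx i 0 : 'cV[R[i]]_p).

Lemma adjmx_delta i : adjmx (ecol i) = 'e_i.
Proof. by apply/matrixP => a b; rewrite !mxE rmorph_nat andbC. Qed.

Lemma qformE (x : 'cV[R[i]]_p) A :
  (adjmx x *m A *m x) 0 0 = \sum_k \sum_l ((x k 0)^* * x l 0) * A k l.
Proof.
rewrite mxE exchange_big /=; apply: eq_bigr => l _.
rewrite mxE mulr_suml; apply: eq_bigr => k _.
by rewrite !mxE mulrAC.
Qed.

Lemma qform_delta A i j : (adjmx (ecol i) *m A *m ecol j) 0 0 = A i j.
Proof. by rewrite adjmx_delta -rowE -colE !mxE. Qed.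

Lemma qform_delta_add A i j c :
  let x := ecol i + c *: ecol j in
  (adjmx x *m A *m x) 0 0 = A i i + c * A i j + c^* * A j i + c^* * c * A j j.
Proof.
have entryD (M N : 'M[R[i]]_1) : (M + N) 0 0 = M 0 0 + N 0 0 by rewrite mxE.
have entryZ a (M : 'M[R[i]]_1) : (a *: M) 0 0 = a * M 0 0 by rewrite mxE.
rewrite /= adjmxD adjmxZ !mulmxDl !mulmxDr -!scalemxAl -!scalemxAr.
by rewrite !entryD !entryZ !qform_delta; ring.
Qed.

Lemma hermitian_entry A i j : Defs.hermitian A -> A j i = (A i j)^*.
Proof. by move=> hermA; rewrite -[in LHS]hermA mxE. Qed.

Lemma psd_diag_ge0 A i : psd A -> 0 <= A i i.
Proof. by case=> _ /(_ (ecol i)); rewrite qform_delta. Qed.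

Lemma psd_entry_le A i j : psd A ->
  `|Re (A i j)| <= (Re (A i i) + Re (A j j)) / 2 /\
  `|Im (A i j)| <= (Re (A i i) + Re (A j j)) / 2.
Proof.
move=> psdA; have [hermA qform_ge0] := psdA.
have /ger0_Im Ajj_real := psd_diag_ge0 j psdA.
have qform_Re c : 0 <= Re (A i i) + 2 * (Re c * Re (A i j) - Im c * Im (A i j))
                       + (Re c * Re c + Im c * Im c) * Re (A j j).
  have := qform_ge0 (ecol i + c *: ecol j).
  rewrite qform_delta_add (hermitian_entry i j hermA) lecE => /andP[_].
  by rewrite /= !raddfD /= !ReM !ImM !ReJ !ImJ Ajj_real; lra.
have := qform_Re 1; have := qform_Re (-1); have := qform_Re 'i%C; have := qform_Re (- 'i%C).
rewrite /= !ler_norml.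
by split; apply/andP; split; lra.
Qed.

Lemma density_diag_le1 A i : density A -> Re (A i i) <= 1.
Proof.
case=> psdA trA; have <- : Re (\tr A) = 1 by rewrite trA.
rewrite /mxtrace raddf_sum /=; apply: ler_psum_term => k.
by have := psd_diag_ge0 k psdA; rewrite lecE => /andP[].
Qed.

Lemma density_entry_le1 A i j : density A ->
  `|Re (A i j)| <= 1 /\ `|Im (A i j)| <= 1.
Proof.
move=> densA; have [psdA _] := densA.
have := density_diag_le1 i densA; have := density_diag_le1 j densA.
have := psd_diag_ge0 i psdA; have := psd_diag_ge0 j psdA; rewrite !lecE.
move=> /andP[_ ?] /andP[_ ?] ? ?; have [Re_le Im_le] := psd_entry_le i j psdA.
by split; [apply: le_trans Re_le _ | apply: le_trans Im_le _]; lra.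
Qed.

Lemma density_sub_schatten2_le A B : density A -> density B ->
  schatten2 (A - B) <= Num.sqrt (2 * p%:R ^+ 2) * 2.
Proof.
move=> densA densB; apply: schatten2_le_entries => // i j.
have [ReA ImA] := density_entry_le1 i j densA.
have [ReB ImB] := density_entry_le1 i j densB.
rewrite !mxE !raddfB; split; apply: le_trans (ler_normB _ _) _; lra.
Qed.

Lemma density_sub_traceless_herm A B : density A -> density B -> traceless_herm (A - B).
Proof.
move=> [[hermA _] trA] [[hermB _] trB]; split; first by rewrite /Defs.hermitian adjmxB hermA hermB.
by rewrite linearB /= trA trB subrr.
Qed.

Definition maximally_mixed : 'M[R[i]]_p := p%:R^-1 *: 1%:M.

Lemma maximally_mixed_density : (0 < p)%N -> density maximally_mixed.
Proof.
move=> p_gt0; have p_neq0 : p%:R != 0 :> R[i] by rewrite pnatr_eq0 -lt0n.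
split; last by rewrite mxtraceZ mxtrace1 mulVf.
split.
  rewrite /Defs.hermitian adjmxZ fmorphV rmorph_nat; congr (_ *: _).
  by apply/matrixP => i j; rewrite !mxE rmorph_nat eq_sym.
move=> x; rewrite /maximally_mixed scalemx1 mul_mx_scalar -scalemxAl mxE.
apply: mulr_ge0; first by rewrite invr_ge0 ler0n.
by rewrite mxE; apply: sumr_ge0 => k _; rewrite mxE mulrC mul_conjC_ge0.
Qed.

End Density.

Section EntryLimits.
Variable p : nat.
Implicit Types (A : 'M[R[i]]_p) (a : nat -> 'M[R[i]]_p).

Definition entry_cvg a A := forall i j, coord_cvg (fun N => a N i j) (A i j).

Definition entry_lim a : 'M[R[i]]_p :=
  \matrix_(i, j) Complex (lim (Re (a N i j) @[N --> \oo]))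
                         (lim (Im (a N i j) @[N --> \oo])).

Lemma density_closed a A : (forall N, density (a N)) -> entry_cvg a A -> density A.
Proof.
move=> dens_a aA; split; [split|].
- apply/matrixP => i j; rewrite mxE; apply: coord_cvg_unique (aA i j).
  have herm_a N : a N i j = (a N j i)^*.
    by case: (dens_a N) => -[herm _] _; exact: hermitian_entry.
  under eq_fun do rewrite herm_a.
  exact/coord_cvgJ/aA.
- move=> x; apply: (@coord_cvg_ge0 (fun N => (adjmx x *m a N *m x) 0 0)).
    by move=> N; case: (dens_a N) => -[_ ->].
  under eq_fun do rewrite qformE; rewrite qformE.
  by apply: coord_cvg_sum => k; apply: coord_cvg_sum => l; apply/coord_cvgMl/aA.
- apply: coord_cvg_unique (coord_cvg_cst 1).
  have -> : (fun=> 1) = fun N => \tr (a N) by apply/funext => N; case: (dens_a N).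
  by apply: coord_cvg_sum => i; apply: aA.
Qed.

End EntryLimits.

Section Channels.
Variable p : nat.
Implicit Types (T : 'M[R[i]]_p -> 'M[R[i]]_p) (A B : 'M[R[i]]_p).

Lemma lin_map0 T : lin_map T -> T 0 = 0.
Proof.
move=> linT; have := linT 1 0 0; rewrite !scale1r addr0 => T0.
by apply: (@addrI _ (T 0)); rewrite addr0 -T0.
Qed.

Lemma lin_mapB T A B : lin_map T -> T (A - B) = T A - T B.
Proof.
move=> linT; have := linT 1 A (- B); rewrite !scale1r => ->.
by have := linT (-1) B 0; rewrite !addr0 lin_map0 // addr0 !scaleN1r => ->.
Qed.

Lemma psd_castmx m n (e : m = n) (A : 'M[R[i]]_m) : psd (castmx (e, e) A) <-> psd A.
Proof. by case: n / e; rewrite castmx_id. Qed.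

Let sum_ord1 : (\sum_(i < 1) p)%N = p := big_ord1 _ _.

Lemma mxblock11 A : \mxblock_(i < 1, j < 1) A = castmx (esym sum_ord1, esym sum_ord1) A.
Proof.
apply/matrixP => s t; rewrite castmxE !mxE /=.
have sig2E (u : 'I_(\sum_(i < 1) p)) :
    tagnat.sig2 u = cast_ord (esym (esym sum_ord1)) u.
  apply: val_inj => /=; rewrite [in RHS](tagnat.rect u).
  by rewrite big1 // => i; rewrite (ord1 i) (ord1 (tagnat.sig1 u)).
by rewrite !sig2E.
Qed.

Lemma completely_positive_psd T A : completely_positive T -> psd A -> psd (T A).
Proof.
move=> cpT psdA; have := cpT 1%N (\mxblock_(i < 1, j < 1) A).
have -> : ampliation T (\mxblock_(i < 1, j < 1) A) = \mxblock_(i < 1, j < 1) T A.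
  by apply: eq_mxblock => i j; rewrite mxblockK.
by rewrite !mxblock11 !psd_castmx; apply.
Qed.

Lemma CPTP_density T A : CPTP T -> density A -> density (T A).
Proof.
by case=> _ cpT trT [psdA trA]; split; [exact: completely_positive_psd | rewrite trT].
Qed.

Lemma lin_map_contract T r : lin_map T ->
  (forall A, traceless_herm A -> A != 0 -> schatten2 (T A) / schatten2 A <= r) ->
  forall A B, density A -> density B ->
  schatten2 (T A - T B) <= r * schatten2 (A - B).
Proof.
move=> linT contrT A B densA densB; rewrite -lin_mapB //.
have [->|AB_neq0] := eqVneq (A - B) 0.
  rewrite lin_map0 //; have /eqP -> : schatten2 (0 : 'M[R[i]]_p) == 0 by rewrite schatten2_eq0.
  by rewrite mulr0.
rewrite -(ler_pdivrMr _ _ (schatten2_gt0 AB_neq0)).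
exact (contrT _ (density_sub_traceless_herm densA densB) AB_neq0).
Qed.

End Channels.

Section CauchyBound.
Variables (x g : nat -> R).
Hypothesis x_cauchy : forall N M, (N <= M)%N -> `|x M - x N| <= g N.

Lemma cauchy_bound_cvg : g @ \oo --> 0 -> cvg (x @ \oo).
Proof.
move=> g_cvg0; apply/cauchy_cvgP/cauchy_exP => e e_gt0.
have [N0 _ gN0_lt] := cvgr0_norm_lt _ g_cvg0 _ e_gt0.
exists (x N0); exists N0 => // M /= N0M; rewrite -ball_normE /= distrC.
apply: le_lt_trans (x_cauchy N0M) _.
exact: le_lt_trans (ler_norm _) (gN0_lt _ (leqnn _)).
Qed.

Lemma cauchy_bound_lim : cvg (x @ \oo) -> forall N, `|x N - lim (x @ \oo)| <= g N.
Proof.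
move=> x_cvg N; have x_near M : (N <= M)%N -> x N - g N <= x M <= x N + g N.
  by move/x_cauchy; rewrite ler_distl.
rewrite ler_distlC; apply/andP; split.
  by apply: limr_ge => //; exists N => // M /= /x_near /andP[].
by apply: limr_le => //; exists N => // M /= /x_near /andP[].
Qed.

End CauchyBound.

Section CauchyEntries.
Variables (p : nat) (a : nat -> 'M[R[i]]_p) (g : nat -> R).
Hypothesis g_cvg0 : g @ \oo --> 0.
Hypothesis a_cauchy : forall N M, (N <= M)%N -> schatten2 (a M - a N) <= g N.

Let Re_cauchy i j N M : (N <= M)%N -> `|Re (a M i j) - Re (a N i j)| <= g N.
Proof.
move=> /a_cauchy; apply: le_trans.
have -> : Re (a M i j) - Re (a N i j) = Re ((a M - a N) i j) by rewrite !mxE raddfB.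
exact: Re_le_schatten2.
Qed.

Let Im_cauchy i j N M : (N <= M)%N -> `|Im (a M i j) - Im (a N i j)| <= g N.
Proof.
move=> /a_cauchy; apply: le_trans.
have -> : Im (a M i j) - Im (a N i j) = Im ((a M - a N) i j) by rewrite !mxE raddfB.
exact: Im_le_schatten2.
Qed.

Lemma entry_lim_cvg : entry_cvg a (entry_lim a).
Proof.
move=> i j; rewrite /coord_cvg mxE /=.
by split; [exact: cauchy_bound_cvg (Re_cauchy i j) g_cvg0 |
           exact: cauchy_bound_cvg (Im_cauchy i j) g_cvg0].
Qed.

Lemma schatten2_sub_entry_lim_le N :
  schatten2 (a N - entry_lim a) <= Num.sqrt (2 * p%:R ^+ 2) * g N.
Proof.
apply: schatten2_le_entries => [|i j].
  by apply: le_trans (a_cauchy (leqnn N)); rewrite schatten2_ge0.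
rewrite !mxE !raddfB /=; split.
  exact: cauchy_bound_lim (Re_cauchy i j) (cauchy_bound_cvg (Re_cauchy i j) g_cvg0) N.
exact: cauchy_bound_lim (Im_cauchy i j) (cauchy_bound_cvg (Im_cauchy i j) g_cvg0) N.
Qed.

End CauchyEntries.

Section Evolution.
Variables (p : nat) (T : R -> 'M[R[i]]_p -> 'M[R[i]]_p) (u : int -> R) (r : R).
Hypothesis p_gt0 : (0 < p)%N.
Hypothesis r_ge0 : 0 <= r.
Hypothesis r_lt1 : r < 1.
Hypothesis T_density : forall j A, density A -> density (T (u j) A).
Hypothesis T_contract : forall j A B, density A -> density B ->
  schatten2 (T (u j) A - T (u j) B) <= r * schatten2 (A - B).
Variable k : int.

Lemma evol_density N A : density A -> density (evol T u k N A).
Proof. by elim: N A => [|N IHN] A densA /=; [|apply: IHN]; apply: T_density. Qed.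

Lemma evol_contract N A B : density A -> density B ->
  schatten2 (evol T u k N A - evol T u k N B) <= r ^+ N.+1 * schatten2 (A - B).
Proof.
elim: N A B => [|N IHN] A B densA densB /=; first by rewrite expr1; apply: T_contract.
apply: le_trans (IHN _ _ (T_density _ densA) (T_density _ densB)) _.
by rewrite [r ^+ N.+2]exprS [r * _]mulrC -mulrA ler_wpM2l ?exprn_ge0 // T_contract.
Qed.

Lemma evol_split P N A : density A ->
  exists2 A', density A' & evol T u k (P + N) A = evol T u k N A'.
Proof.
elim: P A => [|P IHP] A densA; first by exists A.
by rewrite addSn /=; apply: IHP; apply: T_density.
Qed.

Let K : R := Num.sqrt (2 * p%:R ^+ 2).
Let c := r * (K * 2).
Let a N := evol T u k N (maximally_mixed p).

Lemma evol_sub_le N A B : density A -> density B ->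
  schatten2 (evol T u k N A - evol T u k N B) <= c * r ^+ N.
Proof.
move=> densA densB; apply: le_trans (evol_contract N densA densB) _.
rewrite exprSr -mulrA mulrC ler_wpM2r ?exprn_ge0 // ler_wpM2l //.
exact: density_sub_schatten2_le.
Qed.

Let a_cauchy N M : (N <= M)%N -> schatten2 (a M - a N) <= c * r ^+ N.
Proof.
move=> NM; rewrite /a -(subnK NM).
have [A' densA' ->] := evol_split (M - N) N (maximally_mixed_density p_gt0).
exact: evol_sub_le densA' (maximally_mixed_density p_gt0).
Qed.

Let geometric_cvg0 : c * r ^+ N @[N --> \oo] --> 0.
Proof. by apply: cvg_geometric; rewrite ger0_norm. Qed.

Definition evol_lim := entry_lim a.

Lemma evol_lim_density : density evol_lim.
Proof.
apply: density_closed (entry_lim_cvg geometric_cvg0 a_cauchy) => N.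
exact/evol_density/maximally_mixed_density.
Qed.

Lemma evol_cvg (rho : nat -> 'M[R[i]]_p) : (forall N, density (rho N)) ->
  schatten2 (evol T u k N (rho N) - evol_lim) @[N --> \oo] --> 0.
Proof.
move=> dens_rho.
have bound N : schatten2 (evol T u k N (rho N) - evol_lim) <= K * (1 + K) * c * r ^+ N.
  have -> : evol T u k N (rho N) - evol_lim = (evol T u k N (rho N) - a N) + (a N - evol_lim).
    by rewrite addrA subrK.
  apply: le_trans (schatten2_le_add _ _) _.
  have -> : K * (1 + K) * c * r ^+ N = K * (c * r ^+ N + K * (c * r ^+ N)) by ring.
  rewrite ler_wpM2l ?sqrtr_ge0 // lerD //.
    exact/evol_sub_le/maximally_mixed_density.
  exact: schatten2_sub_entry_lim_le geometric_cvg0 a_cauchy N.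
apply: (@squeeze_cvgr _ _ _ _ (cst 0) (fun N => K * (1 + K) * c * r ^+ N)).
- by apply: nearW => N; rewrite schatten2_ge0 bound.
- exact: cvg_cst.
- by apply: cvg_geometric; rewrite ger0_norm.
Qed.

End Evolution.

End DensityOperators.

Theorem lemma1 (R : realType) (n : nat) (L : R) (D : set R)
  (T : R -> 'M[R[i]]_(2 ^ n) -> 'M[R[i]]_(2 ^ n)) (eps : R) :
  (1 <= n)%N -> 0 < L -> compact D ->
  (forall x, D x -> `|x| <= L -> CPTP (T x)) ->
  0 < eps -> eps <= 1 ->
  (forall x, D x -> `|x| <= L ->
     forall A : 'M[R[i]]_(2 ^ n), traceless_herm A -> A != 0 ->
       schatten2 (T x A) / schatten2 A <= 1 - eps) ->
  exists Lim : (int -> R) -> int -> 'M[R[i]]_(2 ^ n),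
    forall (u : int -> R) (k : int), KL L D u ->
      density (Lim u k) /\
      forall rho : nat -> 'M[R[i]]_(2 ^ n), (forall N, density (rho N)) ->
        forall e : R, 0 < e -> exists N0 : nat, forall N : nat, (N0 <= N)%N ->
          schatten2 (evol T u k N (rho N) - Lim u k) < e.
Proof.
move=> _ _ _ cptpT eps_gt0 eps_le1 contrT.
exists (evol_lim T) => u k uKL.
have p_gt0 : (0 < 2 ^ n)%N by rewrite expn_gt0.
have r_ge0 : 0 <= 1 - eps by lra.
have r_lt1 : 1 - eps < 1 by lra.
have T_density j A : density A -> density (T (u j) A).
  by have [Duj Luj] := uKL j; apply: CPTP_density; exact: cptpT.
have T_contract j A B : density A -> density B ->
    schatten2 (T (u j) A - T (u j) B) <= (1 - eps) * schatten2 (A - B).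
  have [Duj Luj] := uKL j; have [linT _ _] := cptpT _ Duj Luj.
  exact: lin_map_contract linT (contrT _ Duj Luj) A B.
split; first exact: (evol_lim_density p_gt0 r_ge0 r_lt1 T_density T_contract).
move=> rho dens_rho e e_gt0.
have evol_cvg0 := evol_cvg p_gt0 r_ge0 r_lt1 T_density T_contract k dens_rho.
have [N0 _ N0_lt] := cvgr0_norm_lt _ evol_cvg0 _ e_gt0.
by exists N0 => N /N0_lt; rewrite ger0_norm ?schatten2_ge0.
Qed.
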